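(* Let $\xi\ge 1$ and let $W_K$ be a kernel walk with excess $\xi$, with induced tree $T(W_K)=(V,E)$. Then $|V|\le 3\xi-1$ and the number of simple edges of $T(W_K)$ is at most $2\xi-2$, and these bounds are tight. Consequently $K_\xi(u,v,z)$ is a polynomial of degree $2\xi-2$ in $u$, $3\xi-1$ in $v$ and $4\xi-2$ in $z$.
   Context: A tree walk of size $m$ and length $L$ is a sequence $W=(v_1,\dots,v_L)$ of elements of $[m]$ in which every element of $[m]$ occurs, such that the graph $T(W)$ with vertex set $[m]$ and edges $\{v_j,v_{j+1}\}$ ($1\le j<L$) and $\{v_L,v_1\}$ is a tree; $W$ is the closed walk $v_1\to\dots\to v_L\to v_1$ with root $v_1$; a root of degree 1 is also a leaf. Each edge is traversed $2k$ times ($k\ge1$); its excess is $k-1$; it is simple if $k=1$ and an excess edge if $k\ge2$. The excess of $W$ is the sum of the edge excesses, i.e. half its length minus the number of edges. A kernel walk is a tree walk such that: (i) no non-root leaf is incident to a simple edge; (ii) if the root is a leaf, its edge is an excess edge; (iii) no non-root vertex has degree exactly $2$ with both incident edges simple. $k_{\xi,s,2\ell}$ is the number of kernel walks of length $2\ell$, excess $\xi$, whose induced tree has $s$ simple edges, and \[ K_\xi(u,v,z)=\sum_{s,\ell\ge0}k_{\xi,s,2\ell}\,u^s\frac{v^{\ell-\xi+1}}{(\ell-\xi+1)!}z^\ell . \] *)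

From mathcomp Require Import all_boot all_algebra.
From mathcomp Require Import boolp.
Set Implicit Arguments. Unset Strict Implicit. Unset Printing Implicit Defensive.
Import GRing.Theory Num.Theory.

(* A walk of size m is a sequence W = (v_1,...,v_L) of elements of [m],
   here represented by 'I_m.  The root is v_1 = head of W. *)

Definition steps m (W : seq 'I_m) : seq ('I_m * 'I_m) := zip W (rot 1 W).

Definition adj m (W : seq 'I_m) : rel 'I_m :=
  fun x y => ((x, y) \in steps W) || ((y, x) \in steps W).

Definition mult m (W : seq 'I_m) (x y : 'I_m) : nat :=
  count (fun p => ((p.1 == x) && (p.2 == y)) || ((p.1 == y) && (p.2 == x)))
        (steps W).

Definition is_tree (T : finType) (e : rel T) : Prop :=
  irreflexive e /\ (forall x y, connect e x y) /\
  ~ (exists s : seq T, [/\ 2 < size s, uniq s & cycle e s]).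

Definition tree_walk m (W : seq 'I_m) : Prop :=
  (forall x : 'I_m, x \in W) /\ is_tree (adj W).

Definition deg m (W : seq 'I_m) (x : 'I_m) : nat := #|[pred y | adj W x y]|.

(* edge {x,y} traversed 2k times: simple iff k = 1, excess edge iff k >= 2 *)
Definition simple_edge m (W : seq 'I_m) (x y : 'I_m) : bool :=
  adj W x y && ((mult W x y)./2 == 1).
Definition excess_edge m (W : seq 'I_m) (x y : 'I_m) : bool :=
  adj W x y && (2 <= (mult W x y)./2).

Definition edges m (W : seq 'I_m) : {set 'I_m * 'I_m} :=
  [set p : 'I_m * 'I_m | (p.1 < p.2)%N && adj W p.1 p.2].

Definition excess m (W : seq 'I_m) : nat :=
  \sum_(p in edges W) ((mult W p.1 p.2)./2 - 1).

Definition nsimple m (W : seq 'I_m) : nat :=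
  #|[set p in edges W | simple_edge W p.1 p.2]|.

Definition is_root m (W : seq 'I_m) (x : 'I_m) : bool := ohead W == Some x.

Definition kernel_walk m (W : seq 'I_m) : Prop :=
  [/\ tree_walk W,
      (forall x y, ~~ is_root W x -> deg W x = 1 -> adj W x y ->
                   ~~ simple_edge W x y),
      (forall x y, is_root W x -> deg W x = 1 -> adj W x y -> excess_edge W x y)
    &
      (forall x, ~~ is_root W x -> deg W x = 2 ->
                 ~ (forall y, adj W x y -> simple_edge W x y))].

(* k_{xi,s,2l}: number of kernel walks (of any size m) of length 2l,
   excess xi, with s simple edges.  A walk of length 2l visiting all of
   [m] has m <= 2l, so summing over m <= 2l is exhaustive. *)
Definition kcount (xi s l : nat) : nat :=
  \sum_(m < (2 * l).+1)
    #|[set W : (2 * l).-tuple 'I_m |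
        `[< kernel_walk (tval W) /\ excess (tval W) = xi /\ nsimple (tval W) = s >] ]|.

Local Open Scope ring_scope.

(* coefficient of u^s v^a z^l in K_xi(u,v,z)
   = sum_{s,l} k_{xi,s,2l} u^s v^(l-xi+1)/(l-xi+1)! z^l  (a is an integer
   exponent since l - xi + 1 may a priori be negative) *)
Definition Kcoef (xi : nat) (s : nat) (a : int) (l : nat) : rat :=
  if a == (l%:Z - xi%:Z + 1) then (kcount xi s l)%:R / ((absz a)`!)%:R else 0.

(* F (a formal series in u, v, z given by its coefficients, with
   possibly negative v-exponents) is a polynomial of degree du in u,
   dv in v and dz in z *)
Definition poly_degrees (F : nat -> int -> nat -> rat) (du : nat) (dv : int)
  (dz : nat) : Prop :=
  [/\ (forall s a l, F s a l != 0 ->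
         [/\ (0 <= a)%R, (s <= du)%N, (a <= dv)%R & (l <= dz)%N]),
      (exists a l, F du a l != 0),
      (exists s l, F s dv l != 0)
    & (exists s a, F s a dz != 0)].

(* In the tree of a tree walk, deleting an edge disconnects its endpoints, and a closed
   walk crosses such a cut an even number of times; so every edge is traversed 2k times,
   and a walk of length 2l and excess xi on a tree with E <= m - 1 edges has l = E + xi.
   For a kernel walk with X excess edges, let each excess edge give 4 to an endpoint that
   is a leaf, 2 to the other endpoint, and 3 to each endpoint if neither is a leaf.  The
   kernel conditions make charge + 2 deg at least 6 at every non-root vertex and at
   least 4 at the root, while the charges total at most 6X and the degrees 2E; hence
   m <= 3X - 1 (an excess edge joining two leaves is the whole tree, m = 2).  As
   X <= xi, this gives m <= 3 xi - 1, at most E - X <= 2 xi - 2 simple edges,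
   l = E + xi <= 4 xi - 2 and v-exponent l - xi + 1 = E + 1 <= 3 xi - 1.
   For xi = k + 1 all bounds are attained by the closed walk around a caterpillar with a
   spine of k edges and k + 1 pendant paths, whose edges at the leaves are traversed
   four times. *)

From mathcomp Require Import all_boot all_algebra.
From mathcomp Require Import boolp.
From mathcomp Require Import zify.
Set Implicit Arguments. Unset Strict Implicit. Unset Printing Implicit Defensive.
Import GRing.Theory Num.Theory.

Lemma zip_cons_rcons (T : Type) (x y : T) s :
  zip (x :: s) (rcons s y) = pairmap pair x (rcons s y).
Proof. by elim: s x => //= z s IHs x; rewrite IHs. Qed.

Lemma path_pairmap (T : Type) (e : rel T) x s :
  path e x s = all (fun p => e p.1 p.2) (pairmap pair x s).
Proof. by elim: s x => //= y s IHs x; rewrite IHs. Qed.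

Lemma infix_map (T1 T2 : eqType) (f : T1 -> T2) s t :
  infix s t -> infix (map f s) (map f t).
Proof. by case/infixP => [p [q ->]]; rewrite !map_cat infix_infix. Qed.

Lemma infix_pairmap (T : eqType) (x a : T) s t :
  infix (a :: t) (x :: s) -> infix (pairmap pair a t) (pairmap pair x s).
Proof.
case/infixP => -[|y p] [q] [-> ->] /=; rewrite pairmap_cat ?prefix_infix //=.
by rewrite pairmap_cat; apply/infix_catl/(infix_trans _ (infix_cons _ _))/prefix_infix.
Qed.

Lemma odd_count_zip (T : eqType) (f : pred T) s t : size s = size t ->
  odd (count (fun p => f p.1 != f p.2) (zip s t)) = odd (count f s) (+) odd (count f t).
Proof.
elim: s t => [|a s IHs] [|b t] //= [/IHs]; rewrite !oddD => ->.
by case: (f a); case: (f b); case: (odd (count f s)); case: (odd (count f t)).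
Qed.

Lemma even_count_crossing (T : eqType) (f : pred T) s :
  ~~ odd (count (fun p => f p.1 != f p.2) (zip s (rot 1 s))).
Proof.
have /permP count_rot : perm_eq (rot 1 s) s by rewrite perm_rot.
by rewrite odd_count_zip ?size_rot // count_rot addbb.
Qed.

Lemma sum_count_mem (T : finType) (s : seq T) : \sum_(x : T) count_mem x s = size s.
Proof.
elim: s => [|a s IHs] /=; first by rewrite big1.
rewrite big_split /= IHs (bigD1 a) //= eqxx big1 ?addn0 // => x /negbTE.
by rewrite eq_sym => ->.
Qed.

Section Acyclic.
Variables (T : finType) (e : rel T).

Definition acyclic := ~ exists s : seq T, [/\ 2 < size s, uniq s & cycle e s].

Definition delete_edge x y : rel T :=
  [rel u v | e u v && ~~ ((u == x) && (v == y) || (u == y) && (v == x))].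

Definition delete_vertex b : rel T := [rel u v | e u v && (u != b) && (v != b)].

Hypotheses (e_sym : symmetric e) (e_irr : irreflexive e) (e_acyclic : acyclic).

Lemma delete_edge_sym x y : symmetric (delete_edge x y).
Proof.
move=> u v; rewrite /delete_edge /= e_sym.
by case: (u == x); case: (u == y); case: (v == x); case: (v == y); rewrite ?andbF ?andbT.
Qed.

Lemma delete_vertex_sym b : symmetric (delete_vertex b).
Proof. by move=> u v; rewrite /delete_vertex /= e_sym -!andbA; congr andb; rewrite andbC. Qed.

Lemma acyclic_closing_path h q :
  path e h q -> uniq (h :: q) -> e (last h q) h -> size q < 2.
Proof.
move=> e_hq Uhq closing; rewrite ltnNge; apply/negP => q_ge2.
by apply: e_acyclic; exists (h :: q); split => //=; rewrite rcons_path e_hq.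
Qed.

Lemma acyclic_edge_cut x y : e x y -> ~~ connect (delete_edge x y) y x.
Proof.
move=> exy; apply/negP => /connectP[p yp].
case: (shortenP yp) => q yq Uq _ def_x; rewrite def_x in exy.
have sub_e : subrel (delete_edge x y) e by move=> u v /andP[].
have := acyclic_closing_path (sub_path sub_e yq) Uq exy.
case: q yq {Uq sub_e} def_x exy => [|z [|]] //=; first by rewrite e_irr.
by move=> + xz; rewrite xz /delete_edge /= !eqxx orbT andbF.
Qed.

Lemma acyclic_neighbours_disconnected a b c :
  e a b -> e c b -> connect (delete_vertex b) a c -> a = c.
Proof.
move=> eab ecb /connectP[p ap].
case: (shortenP ap) => q aq Uq _ def_c; rewrite def_c in ecb *.
have qNb : b \notin q.
  elim: q a aq {ap eab ecb Uq def_c} => //= z q IHq u /andP[/andP[/andP[_ _] zNb] /IHq].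
  by rewrite in_cons negb_or eq_sym zNb.
have aNb : a != b by apply: contraTneq eab => ->; rewrite e_irr.
have sub_e : subrel (delete_vertex b) e by move=> u v /andP[/andP[]].
have Ubq : uniq (b :: a :: q) by rewrite /= in_cons negb_or eq_sym aNb qNb.
have := acyclic_closing_path (q := a :: q) _ Ubq ecb.
rewrite /= e_sym eab (sub_path sub_e aq).
by case: q {aq Uq qNb Ubq ecb def_c} => // z q /(_ isT).
Qed.

End Acyclic.

Section Walks.
Variable m : nat.
Implicit Types (W s : seq 'I_m) (r x y : 'I_m).

Lemma steps_cons x s : steps (x :: s) = pairmap pair x (rcons s x).
Proof. by rewrite /steps rot1_cons zip_cons_rcons. Qed.

Lemma cycle_steps (e : rel 'I_m) W : cycle e W = all (fun p => e p.1 p.2) (steps W).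
Proof. by case: W => // x s; rewrite steps_cons -path_pairmap. Qed.

Lemma steps_adj W x y : (x, y) \in steps W -> adj W x y.
Proof. by rewrite /adj => ->. Qed.

Lemma adj_sym W : symmetric (adj W).
Proof. by move=> x y; rewrite /adj orbC. Qed.

Lemma mult_sym W x y : mult W x y = mult W y x.
Proof. by apply: eq_count => p; rewrite orbC. Qed.

Lemma excess_edge_sym W x y : excess_edge W x y = excess_edge W y x.
Proof. by rewrite /excess_edge adj_sym mult_sym. Qed.

Lemma steps_mem W x y : (x, y) \in steps W -> (x \in W) && (y \in W).
Proof.
move=> xy; have sz : size W <= size (rot 1 W) by rewrite size_rot.
have : x \in unzip1 (steps W) by apply/mapP; exists (x, y).
have : y \in unzip2 (steps W) by apply/mapP; exists (x, y).
by rewrite /steps (unzip1_zip sz) unzip2_zip ?size_rot // mem_rot => -> ->.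
Qed.

Lemma adj_mem W x y : adj W x y -> x \in W.
Proof. by case/orP => /steps_mem /andP[]. Qed.

Lemma deg_gt0 W x : x \in W -> 0 < deg W x.
Proof.
have sz : size W <= size (rot 1 W) by rewrite size_rot.
rewrite -[W in x \in W](unzip1_zip sz) => /mapP[[a y] xy /= ->].
by apply/card_gt0P; exists y; rewrite inE steps_adj.
Qed.

Lemma walk_path r s : path (adj (r :: s)) r s.
Proof.
have : cycle (adj (r :: s)) (r :: s) by rewrite cycle_steps; apply/allP => -[a b] /steps_adj.
by rewrite /= rcons_path => /andP[].
Qed.

Lemma connect_walk W x y : x \in W -> y \in W -> connect (adj W) x y.
Proof.
case: W => // r s xW yW; have connect_r := path_connect (walk_path r s).
apply: (connect_trans (y := r)); last exact: connect_r.
by rewrite (sym_connect_sym (adj_sym (r :: s))) connect_r.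
Qed.

Lemma steps_infix x s a t :
  infix (a :: t) (x :: rcons s x) -> infix (pairmap pair a t) (steps (x :: s)).
Proof. by rewrite steps_cons; apply: infix_pairmap. Qed.

Lemma adj_infix x s a b : infix [:: a; b] (x :: rcons s x) -> adj (x :: s) a b.
Proof. by move/steps_infix; rewrite infix1s => /steps_adj. Qed.

Lemma excess_edge_infix x s a b :
  infix [:: a; b; a; b; a] (x :: rcons s x) -> excess_edge (x :: s) a b.
Proof.
move=> abab; rewrite /excess_edge adj_infix; last first.
  by apply: infix_trans abab; apply: (prefix_infix [:: a; b]).
rewrite -[2]/(4./2) half_leq // /mult.
apply: leq_trans (leq_count_subseq _ (infixW (steps_infix abab))).
by rewrite /= !eqxx orbT.
Qed.

Lemma mult_split W x y : x != y ->
  mult W x y = count_mem (x, y) (steps W) + count_mem (y, x) (steps W).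
Proof.
move=> xNy; rewrite -count_predUI (@eq_count _ (predI _ _) pred0) ?count_pred0 ?addn0.
  by apply: eq_count => -[a b]; rewrite /= !xpair_eqE.
move=> [a b] /=; rewrite !xpair_eqE; apply/negP => /andP[/andP[/eqP-> _] /andP[/eqP yx _]].
by rewrite yx eqxx in xNy.
Qed.

Lemma deg1_adj W x y z : deg W x = 1 -> adj W x y -> adj W x z -> y = z.
Proof.
move/eqP/card1P => [w def_w] xy xz.
by move: (def_w y) (def_w z); rewrite !inE xy xz => /esym/eqP-> /esym/eqP->.
Qed.

End Walks.

Section TreeWalk.
Variables (m : nat) (W : seq 'I_m).
Hypothesis W_tree : tree_walk W.

Lemma tree_walk_cover x : x \in W.
Proof. by case: W_tree. Qed.

Lemma adj_irr : irreflexive (adj W).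
Proof. by case: W_tree => _ []. Qed.

Lemma adj_acyclic : acyclic (adj W).
Proof. by case: W_tree => _ [_ []]. Qed.

Lemma odd_mult x y : adj W x y -> ~~ odd (mult W x y).
Proof.
move=> xy; set cut := delete_edge (adj W) x y.
have cut_sym : connect_sym cut := sym_connect_sym (delete_edge_sym (adj_sym W) x y).
pose side u := connect cut u x.
have side_x : side x := connect0 cut x.
have sideNy : ~~ side y := acyclic_edge_cut adj_irr adj_acyclic xy.
(* The steps crossing between the two sides of the cut are the traversals of xy. *)
suff -> : mult W x y = count (fun p => side p.1 != side p.2) (steps W).
  exact: even_count_crossing.
apply: eq_in_count => -[a b] /= ab.
case xy_ab: ((a == x) && (b == y) || (a == y) && (b == x)).
  by case/orP: xy_ab => /andP[/eqP-> /eqP->]; rewrite side_x (negbTE sideNy).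
have cut_ab : cut a b by rewrite /cut /delete_edge /= steps_adj ?xy_ab.
by rewrite /side (same_connect1 cut_sym cut_ab) eqxx.
Qed.

Lemma earlier_neighbour_unique a b c : index a W < index b W -> index c W < index b W ->
  adj W a b -> adj W c b -> a = c.
Proof.
move=> ab cb ab_adj cb_adj.
case def_W: W (tree_walk_cover a) => [//|r s] _.
have [k def_k] : exists k, index b W = k.+1 by case: (index b W) ab => [|k]; last exists k.
have pre_def : take (index b W) W = r :: take k s by rewrite def_k def_W.
have pre_mem z : index z W < index b W -> z \in r :: take k s.
  by move=> zb; rewrite -pre_def in_take ?tree_walk_cover.
have bNpre : b \notin r :: take k s by rewrite -pre_def in_take ?tree_walk_cover ?ltnn.
set cut := delete_vertex (adj W) b.
have cut_path : path cut r (take k s).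
  apply: (sub_in_path (P := [pred u | u != b]) (e := adj W)).
  - by move=> u v; rewrite !inE => uNb vNb uv; rewrite /cut /delete_vertex /= uv uNb vNb.
  - by apply/allP => u u_pre; apply: contraNneq bNpre => <-.
  - by rewrite def_W take_path ?walk_path.
have cut_sym : connect_sym cut := sym_connect_sym (delete_vertex_sym (adj_sym W) b).
have conn := path_connect cut_path.
apply: (acyclic_neighbours_disconnected (adj_sym W) adj_irr adj_acyclic ab_adj cb_adj).
by apply: connect_trans (conn c (pre_mem c cb)); rewrite cut_sym conn ?pre_mem.
Qed.

Lemma edges_card : #|edges W| <= m.-1.
Proof.
case def_W: W => [|r s].
  by rewrite (_ : edges [::] = set0) ?cards0 //; apply/setP => p; rewrite !inE /adj /steps /= andbF.
rewrite -def_W.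
(* Send each edge to its endpoint visited later: this is injective and misses the root. *)
pose earlier p := if index p.1 W < index p.2 W then p.1 else p.2.
pose later p := if index p.1 W < index p.2 W then p.2 else p.1.
have edge_order p : p \in edges W -> [/\ index (earlier p) W < index (later p) W,
    adj W (earlier p) (later p) &
    p = if (earlier p < later p)%N then (earlier p, later p) else (later p, earlier p)].
  case: p => u v; rewrite inE /= => /andP[uv uv_adj].
  have uNv : index u W != index v W.
    by apply: contraTneq uv => /index_inj-> //; rewrite ?tree_walk_cover ?ltnn.
  rewrite /earlier /later /=; case: (ltngtP (index u W) (index v W)) uNv => // vu _.
    by rewrite uv.
  by rewrite adj_sym uv_adj (leq_gtF (ltnW uv)).
have later_inj : {in edges W &, injective later}.
  move=> p q /edge_order[pl p_adj def_p] /edge_order[ql q_adj def_q] lpq.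
  rewrite -lpq in ql q_adj.
  by rewrite def_p def_q -lpq (earlier_neighbour_unique pl ql p_adj q_adj).
have later_Nr : later @: edges W \subset [set~ r].
  apply/subsetP => _ /imsetP[p /edge_order[pl _ _] ->]; rewrite !inE.
  by apply: contraTneq pl => ->; rewrite def_W /= eqxx.
rewrite -(card_in_imset later_inj); apply: leq_trans (subset_leq_card later_Nr) _.
by rewrite cardsC1 card_ord.
Qed.

Lemma mult_double x y : adj W x y -> (mult W x y)./2.*2 = mult W x y.
Proof. by move/odd_mult => even_xy; rewrite -[RHS]odd_double_half (negbTE even_xy). Qed.

Lemma half_mult_gt0 x y : adj W x y -> 0 < (mult W x y)./2.
Proof.
move=> xy; rewrite -double_gt0 mult_double // -has_count.
by case/orP: xy => xy; apply/hasP; [exists (x, y) | exists (y, x)]; rewrite //= !eqxx ?orbT.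
Qed.

Lemma excess_edgeN x y : adj W x y -> excess_edge W x y = ~~ simple_edge W x y.
Proof.
move=> xy; rewrite /excess_edge /simple_edge xy /=.
by have := half_mult_gt0 xy; case: (_./2) => [|[|]].
Qed.

Lemma sum_adj_edges (F : 'I_m -> 'I_m -> nat) :
  \sum_(p | adj W p.1 p.2) F p.1 p.2 = \sum_(p in edges W) (F p.1 p.2 + F p.2 p.1).
Proof.
rewrite big_split /= (bigID (fun p : 'I_m * 'I_m => (p.1 < p.2)%N)) /=.
congr (_ + _); first by apply: eq_bigl => p; rewrite inE andbC.
rewrite (reindex_inj (h := fun p : 'I_m * 'I_m => (p.2, p.1))); last by move=> [a b] [c d] [-> ->].
apply: eq_bigl => -[a b]; rewrite inE /= [adj W b a]adj_sym.
case ab: (adj W a b); rewrite ?andbF //= andbT -leqNgt leq_eqVlt.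
by have /negbTE-> : (a : nat) != b by apply: contraFneq (adj_irr a) => /val_inj {2}->.
Qed.

Lemma size_tree_walk : size W = 2 * (#|edges W| + excess W).
Proof.
have -> : size W = size (steps W) by rewrite /steps size_zip size_rot minnn.
rewrite -sum_count_mem.
rewrite (bigID (fun p : 'I_m * 'I_m => adj W p.1 p.2)) /= addnC big1 => [|[a b] /= ab]; last first.
  by apply/count_memPn; apply: contraNN ab => /steps_adj.
rewrite add0n (eq_bigr (fun p => count_mem (p.1, p.2) (steps W))) => [|[]//].
rewrite (sum_adj_edges (fun a b => count_mem (a, b) (steps W))).
rewrite (eq_bigr (fun p => 2 * (mult W p.1 p.2)./2)) => [|p]; last first.
  rewrite inE => /andP[lt_p p_adj]; rewrite mul2n mult_double // mult_split //.
  by apply: contraTneq lt_p => ->; rewrite ltnn.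
rewrite -big_distrr /= /excess -sum1_card -big_split /=; congr (2 * _).
apply: eq_bigr => p; rewrite inE => /andP[_ /half_mult_gt0].
by case: (_./2) => // h _; rewrite add1n subSS subn0.
Qed.

Lemma leaf_edge_card u v : adj W u v -> deg W u = 1 -> deg W v = 1 -> m <= 2.
Proof.
move=> uv deg_u deg_v.
have nbr x y : adj W x y -> x \in [:: u; v] -> y \in [:: u; v].
  move=> xy; rewrite !inE => /orP[]/eqP def_x; rewrite def_x in xy.
    by rewrite (deg1_adj deg_u xy uv) eqxx orbT.
  by rewrite (deg1_adj deg_v xy (_ : adj W v u)) ?eqxx // adj_sym.
have uv_closed : closed (adj W) [:: u; v].
  by move=> x y xy; apply/idP/idP; apply: nbr; rewrite // adj_sym.
rewrite -[m]card_ord; apply: leq_trans (card_size [:: u; v]).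
apply/subset_leq_card/subsetP => w _.
have connect_uw := connect_walk (tree_walk_cover u) (tree_walk_cover w).
by rewrite -(closed_connect uv_closed connect_uw) mem_head.
Qed.

End TreeWalk.

Definition nexcess m (W : seq 'I_m) : nat := \sum_(p in edges W) excess_edge W p.1 p.2.

Definition charge m (W : seq 'I_m) (v y : 'I_m) : nat :=
  if excess_edge W v y then (if deg W v == 1 then 4 else if deg W y == 1 then 2 else 3)
  else 0.

Section KernelBound.
Variables (m : nat) (W : seq 'I_m).
Hypothesis W_kernel : kernel_walk W.

Let W_tree : tree_walk W. Proof. by case: W_kernel. Qed.

Lemma nsimple_add_nexcess : nsimple W + nexcess W = #|edges W|.
Proof.
rewrite /nsimple -sum1_card (eq_bigl (fun p => (p \in edges W) && simple_edge W p.1 p.2)).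
  rewrite big_mkcondr -sum1_card -big_split /=; apply: eq_bigr => p.
  by rewrite inE => /andP[_ /(excess_edgeN W_tree)->]; case: simple_edge.
by move=> p; rewrite !inE.
Qed.

Lemma nexcess_le_excess : nexcess W <= excess W.
Proof.
apply: leq_sum => p _; rewrite /excess_edge.
by case: adj; case: leqP => //= le2; rewrite subn_gt0.
Qed.

Lemma charge_ge2 v y : excess_edge W v y -> 2 <= charge W v y.
Proof. by rewrite /charge => ->; case: ifP => //; case: ifP. Qed.

Lemma charge_vertex v :
  (if is_root W v then 4 else 6) <= \sum_(y | adj W v y) charge W v y + 2 * deg W v.
Proof.
have le_charge z : adj W v z -> charge W v z <= \sum_(y | adj W v y) charge W v y.
  by move=> vz; rewrite (bigD1 z) ?leq_addr.
have deg_v := deg_gt0 (tree_walk_cover W_tree v).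
have [y vy] : exists y, adj W v y by move/card_gt0P: deg_v => [y]; rewrite inE; exists y.
case: W_kernel => _ leaf_simple root_leaf deg2_simple.
case: (ltngtP (deg W v) 2) => [deg_lt2|deg_gt2|deg_eq2]; last 1 first.
- case: ifP => [|vNr]; first by rewrite deg_eq2; lia.
  have /existsP[z /andP[vz vzNs]] : [exists z, adj W v z && ~~ simple_edge W v z].
    apply: contraT => /existsPn none; case: (deg2_simple v (negbT vNr) deg_eq2) => z vz.
    by have := none z; rewrite vz negbK.
  have := charge_ge2 (_ : excess_edge W v z); rewrite excess_edgeN // => /(_ vzNs).
  by have := le_charge z vz; rewrite deg_eq2; lia.
- have deg1 : deg W v = 1 by lia.
  have vy_ex : excess_edge W v y.
    case: (boolP (is_root W v)) => [vr|vNr]; first exact: root_leaf.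
    by rewrite excess_edgeN // leaf_simple.
  have := le_charge y vy; rewrite /charge vy_ex deg1 eqxx.
  by case: ifP; lia.
- by case: ifP; lia.
Qed.

Lemma sum_deg : \sum_v deg W v = 2 * #|edges W|.
Proof.
under eq_bigr => v _ do rewrite /deg -sum1_card.
rewrite (pair_big_dep predT (fun v y => y \in [pred y | adj W v y]) (fun _ _ => 1)) /=.
rewrite (eq_bigl (fun p => adj W p.1 p.2)) => [|p]; last by rewrite inE.
by rewrite (sum_adj_edges W_tree (fun _ _ => 1)) sum_nat_const mulnC.
Qed.

Lemma sum_charge :
  (forall u v, excess_edge W u v -> deg W u = 1 -> deg W v = 1 -> False) ->
  \sum_v \sum_(y | adj W v y) charge W v y <= 6 * nexcess W.
Proof.
move=> no_leaf_pair.
rewrite (pair_big_dep predT (fun v y => adj W v y) (charge W)) /=.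
rewrite (sum_adj_edges W_tree (charge W)) big_distrr /=; apply: leq_sum => p _.
rewrite /charge [excess_edge W p.2 p.1]excess_edge_sym.
case pex: (excess_edge W p.1 p.2) => //=.
case: eqP => deg1; case: eqP => deg2 //.
by case: (no_leaf_pair _ _ pex deg1 deg2).
Qed.

Lemma nexcess_gt0 u v : excess_edge W u v -> 0 < nexcess W.
Proof.
move=> uv; have uv_adj : adj W u v by case/andP: uv.
have [p pE p_ex] : exists2 p, p \in edges W & excess_edge W p.1 p.2.
  case: (ltngtP u v) => [lt_uv | lt_vu | /val_inj eq_uv].
  - by exists (u, v); rewrite // inE /= lt_uv.
  - exists (v, u); last by rewrite excess_edge_sym.
    by rewrite inE /= lt_vu adj_sym.
  - by move: (adj_irr W_tree u); rewrite {2}eq_uv uv_adj.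
by rewrite /nexcess (bigD1 p) //= p_ex.
Qed.

Lemma kernel_card_bound : m <= 3 * nexcess W - 1.
Proof.
case: (posnP m) => [m0 | m_gt0]; first by rewrite {1}m0.
have [r r_root] : exists r, is_root W r.
  by case: W (tree_walk_cover W_tree (Ordinal m_gt0)) => // r s _; exists r; rewrite /is_root.
have rootE v : is_root W v = (v == r).
  by move: r_root; rewrite /is_root => /eqP->; apply/eqP/eqP => [[]|->].
have charge_total :
    6 * m.-1 + 4 <= \sum_v (\sum_(y | adj W v y) charge W v y + 2 * deg W v).
  rewrite (bigD1 r) //= addnC; apply: leq_add; first by have := charge_vertex r; rewrite r_root.
  have -> : 6 * m.-1 = \sum_(v | v != r) 6 by rewrite sum_nat_const cardC1 card_ord mulnC.
  by apply: leq_sum => v vNr; have := charge_vertex v; rewrite rootE (negbTE vNr).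
rewrite big_split /= -big_distrr /= sum_deg in charge_total.
case: (boolP [exists u, exists v, [&& excess_edge W u v, deg W u == 1 & deg W v == 1]]).
  move=> /existsP[u /existsP[v /and3P[uv /eqP deg_u /eqP deg_v]]].
  have uv_adj : adj W u v by case/andP: uv.
  have := leaf_edge_card W_tree uv_adj deg_u deg_v; have := nexcess_gt0 uv.
  move: (nexcess W) => X; lia.
move=> no_leaf_pair; have := edges_card W_tree.
suff : \sum_v \sum_(y | adj W v y) charge W v y <= 6 * nexcess W.
  move: charge_total; move: (nexcess W) #|edges W| (\sum_v _) => X E C; lia.
apply: sum_charge => u v uv deg_u deg_v; move/negP: no_leaf_pair; apply.
by apply/existsP; exists u; apply/existsP; exists v; rewrite uv deg_u deg_v.
Qed.

Lemma kernel_walk_bounds :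
  [/\ m <= 3 * excess W - 1, nsimple W <= 2 * excess W - 2 & #|edges W| <= 3 * excess W - 2].
Proof.
have := kernel_card_bound; have := nsimple_add_nexcess; have := nexcess_le_excess.
have := edges_card W_tree.
move: (nexcess W) (nsimple W) (excess W) #|edges W| => X S E N *; split; lia.
Qed.

End KernelBound.

Definition parent_rel (T : eqType) (rank : T -> nat) (par : T -> T) : rel T :=
  fun a b => (rank a < rank b) && (a == par b) || (rank b < rank a) && (b == par a).

Section ParentTree.
Variables (m : nat) (par : 'I_m -> 'I_m).
Local Notation parent := (parent_rel (@nat_of_ord m) par).

Lemma parent_rel_acyclic : acyclic parent.
Proof.
case=> s [s_gt2 Us cycle_s].
have [v v_s v_max] : exists2 v, v \in s & forall z, z \in s -> (z <= v)%N.
  case: s s_gt2 {Us cycle_s} => // x s _.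
  by case: (@arg_maxnP _ x (mem (x :: s)) val (mem_head x s)) => v; exists v.
have parent_v z : z \in s -> z != v -> parent z v -> z = par v.
  move=> z_s zNv; have lt_zv : (z < v)%N by rewrite ltn_neqAle val_eqE zNv v_max.
  by rewrite /parent_rel lt_zv (leq_gtF (ltnW lt_zv)) orbF => /eqP.
case: (rot_to v_s) => i t def_s.
have t_s z : z \in t -> z \in s by move=> z_t; rewrite -(mem_rot i) def_s inE z_t orbT.
have Uvt : uniq (v :: t) by rewrite -def_s rot_uniq.
have cycle_vt : cycle parent (v :: t) by rewrite -def_s rot_cycle.
have size_vt : 2 < size (v :: t) by rewrite -def_s size_rot.
case: t t_s Uvt cycle_vt size_vt {def_s} => [|a [|b t]] // t_s.
rewrite /= !inE !negb_or rcons_path /=.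
move=> /and4P[/and3P[vNa vNb vNt] /andP[aNb aNt] _ _] /and4P[va _ _ cv] _.
have c_bt : last b t \in b :: t by apply: mem_last.
have aNc : a != last b t by apply: contraTneq c_bt => <-; rewrite inE negb_or aNb.
have vNc : last b t != v by apply: contraTneq c_bt => ->; rewrite inE negb_or vNb.
have a_s : a \in s by apply: t_s; rewrite mem_head.
have c_s : last b t \in s by apply: t_s; rewrite inE c_bt orbT.
have a_par : a = par v by apply: parent_v; rewrite // 1?eq_sym // /parent_rel orbC.
have c_par : last b t = par v by apply: parent_v.
by rewrite a_par c_par eqxx in aNc.
Qed.

Lemma tree_walk_of_parent r s :
  (forall v, v != r -> adj (r :: s) (par v) v /\ (par v < v)%N) -> cycle parent (r :: s) ->
  tree_walk (r :: s) /\ #|edges (r :: s)| = m.-1.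
Proof.
move=> par_adj cycle_W; set W := r :: s.
have adj_parent : subrel (adj W) parent.
  move: cycle_W; rewrite cycle_steps => /allP steps_parent x y.
  by case/orP => [/steps_parent | /steps_parent]; rewrite // /parent_rel orbC.
have cover x : x \in W.
  case: (eqVneq x r) => [->|/par_adj[px _]]; first exact: mem_head.
  by apply: (adj_mem (y := par x)); rewrite adj_sym.
have W_tree : tree_walk W.
  split=> //; split; last split.
  - by move=> x; apply/negbTE/negP => /adj_parent; rewrite /parent_rel ltnn.
  - by move=> x y; apply: connect_walk.
  - by case=> c [c_gt2 Uc /(sub_cycle adj_parent) cycle_c]; apply: parent_rel_acyclic; exists c.
split => //; apply/eqP; rewrite eqn_leq edges_card //=.
have par_inj : {in predC1 r &, injective (fun v => (par v, v))} by move=> u v _ _ [].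
rewrite -[m in m.-1]card_ord -(cardC1 r) -(card_in_imset par_inj).
apply/subset_leq_card/subsetP => _ /imsetP[v /par_adj[vp lt_pv] ->].
by rewrite inE /= lt_pv.
Qed.

End ParentTree.

Lemma deg_ge m (W : seq 'I_m) x (s : seq 'I_m) :
  uniq s -> all (adj W x) s -> size s <= deg W x.
Proof.
move=> Us s_adj; rewrite /deg -(card_uniqP Us); apply/subset_leq_card/subsetP => y y_s.
by rewrite inE (allP s_adj).
Qed.

Lemma kernel_walk_of_excess m (W : seq 'I_m) : tree_walk W ->
  (forall x, (exists y, excess_edge W x y) \/ (if is_root W x then 2 else 3) <= deg W x) ->
  kernel_walk W.
Proof.
move=> W_tree heavy; have adj_excess x y : excess_edge W x y -> adj W x y by case/andP.
have excessN x y : excess_edge W x y -> ~~ simple_edge W x y.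
  by move=> xy; rewrite -excess_edgeN ?adj_excess.
split=> // [x y xNr deg1 xy | x y xr deg1 xy | x xNr deg2 all_simple].
- case: (heavy x) => [[z xz] | ]; last by rewrite (negbTE xNr) deg1.
  by rewrite (deg1_adj deg1 xy (adj_excess _ _ xz)) excessN.
- case: (heavy x) => [[z xz] | ]; last by rewrite xr deg1.
  by rewrite (deg1_adj deg1 xy (adj_excess _ _ xz)).
- case: (heavy x) => [[z xz] | ]; last by rewrite (negbTE xNr) deg2.
  by have := excessN _ _ xz; rewrite all_simple ?adj_excess.
Qed.

(* The caterpillar: the spine is 0, 3, ..., 3k, each 3i < 3k carries the pendant path
   3i, 3i+1, 3i+2, and 3k carries the leaf 3k+1. *)
Definition comb_parent (v : nat) : nat := if 3 %| v then v - 3 else v.-1.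

(* comb k.+1 hangs comb k, shifted by 3, below the new root 0 and then runs through
   0, 1, 2, 1, 2, 1; as in steps, the closing step back to 0 is implicit. *)
Fixpoint comb (k : nat) : seq nat :=
  if k is k'.+1 then 0 :: map (addn 3) (rcons (comb k') 0) ++ [:: 0; 1; 2; 1; 2; 1]
  else [:: 0; 1; 0; 1].

Local Notation comb_rel := (parent_rel id comb_parent).
Local Notation tour k := (rcons (comb k) 0).

Lemma comb_cons k : comb k = 0 :: behead (comb k).
Proof. by case: k. Qed.

Lemma comb_tourS k :
  tour k.+1 = 0 :: map (addn 3) (tour k) ++ [:: 0; 1; 2; 1; 2; 1; 0].
Proof. by rewrite /= rcons_cat. Qed.

Lemma size_comb k : size (comb k) = 8 * k + 4.
Proof. by elim: k => // k IHk; rewrite /= size_cat size_map size_rcons IHk /=; lia. Qed.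

Lemma comb_tour_le k : all (fun v => v <= (3 * k).+1) (tour k).
Proof.
elim: k => // k IHk; rewrite comb_tourS /= all_cat all_map (sub_all _ IHk) => [|v /=]; last by lia.
by rewrite mulnS.
Qed.

Lemma comb_parent_le v : comb_parent v <= v.
Proof. by rewrite /comb_parent; case: ifP; lia. Qed.

Lemma comb_parent_lt v : 0 < v -> comb_parent v < v.
Proof. by rewrite /comb_parent; case: ifP => [/dvdnP[q ->]|_]; lia. Qed.

Lemma comb_parent_shift v : 0 < v -> comb_parent (3 + v) = 3 + comb_parent v.
Proof. by rewrite /comb_parent dvdn_addr //; case: ifP => [/dvdnP[q ->]|_]; lia. Qed.

Lemma comb_rel_shift a b : comb_rel a b -> comb_rel (3 + a) (3 + b).
Proof.
rewrite /parent_rel /= !ltn_add2l => /orP[]/andP[lt_ab /eqP def_a].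
  by rewrite lt_ab (comb_parent_shift (v := b)) -?def_a ?eqxx //; lia.
by rewrite lt_ab (comb_parent_shift (v := a)) -?def_a ?eqxx ?orbT //; lia.
Qed.

Lemma comb_path k : path comb_rel 0 (behead (tour k)).
Proof.
elim: k => // k IHk.
have tourE : tour k = 0 :: rcons (behead (comb k)) 0 by rewrite {1}comb_cons.
rewrite tourE /= in IHk; rewrite comb_tourS tourE /= cat_path path_map last_map last_rcons.
by rewrite (sub_path _ IHk) // => u v; apply: comb_rel_shift.
Qed.

Lemma comb_tour_shift k t :
  infix t (tour k) -> infix (map (addn 3) t) (tour k.+1).
Proof.
move/(infix_map (addn 3))/(infix_catr [:: 0; 1; 2; 1; 2; 1; 0]) => t_tour.
by rewrite comb_tourS; apply: infix_trans t_tour (infix_cons _ _).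
Qed.

Lemma comb_tour_tail k t : infix t [:: 0; 1; 2; 1; 2; 1; 0] -> infix t (tour k.+1).
Proof. by rewrite comb_tourS -cat_cons; apply: infix_catl. Qed.

Lemma comb_tour_parent k v :
  0 < v <= (3 * k).+1 -> infix [:: comb_parent v; v] (tour k).
Proof.
elim: k v => [|k IHk] [|[|[|[|u]]]] // v_le; try exact: comb_tour_tail.
  by rewrite comb_tourS (comb_cons k); apply: (prefix_infix [:: 0; 3]).
rewrite -[u.+4]/(3 + u.+1) comb_parent_shift //.
by apply: (comb_tour_shift (t := [:: _; _])); apply: IHk; rewrite mulnS in v_le; lia.
Qed.

Lemma comb_tour_zigzag k v : 0 < v <= (3 * k).+1 -> (v %% 3 == 2) || (v == (3 * k).+1) ->
  infix [:: comb_parent v; v; comb_parent v; v; comb_parent v] (tour k).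
Proof.
elim: k v => [|k IHk] [|[|[|[|u]]]] // v_le; rewrite ?mulnS // => heavy.
  exact: comb_tour_tail.
rewrite -[u.+4]/(3 + u.+1) comb_parent_shift // in heavy *.
apply: (comb_tour_shift (t := [:: _; _; _; _; _])); apply: IHk.
  by rewrite mulnS in v_le; lia.
by move: heavy; rewrite modnDl -addnS eqn_add2l.
Qed.

Section Comb.
Variable k : nat.
Local Notation M := (3 * k).+1.

Definition comb_walk : seq 'I_M.+1 := map inord (comb k).

Definition comb_par (v : 'I_M.+1) : 'I_M.+1 := inord (comb_parent v).

Lemma comb_walkE : comb_walk = inord 0 :: map (@inord M) (behead (comb k)).
Proof. by rewrite /comb_walk {1}comb_cons. Qed.

Lemma comb_walk_tour :
  inord 0 :: rcons (map inord (behead (comb k))) (inord 0) = map (@inord M) (tour k).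
Proof. by rewrite {2}comb_cons /= map_rcons. Qed.

Lemma inord_eq a b : a <= M -> b <= M -> (inord a == inord b :> 'I_M.+1) = (a == b).
Proof. by move=> a_le b_le; rewrite -val_eqE /= !inordK. Qed.

Lemma comb_adj n : 0 < n <= M -> adj comb_walk (inord (comb_parent n)) (inord n).
Proof.
move/comb_tour_parent/(infix_map inord) => /= tour_n.
by rewrite comb_walkE; apply: adj_infix; rewrite comb_walk_tour.
Qed.

Lemma comb_excess n : 0 < n <= M -> (n %% 3 == 2) || (n == M) ->
  excess_edge comb_walk (inord (comb_parent n)) (inord n).
Proof.
move=> n_le /(comb_tour_zigzag n_le)/(infix_map inord) => /= tour_n.
by rewrite comb_walkE; apply: excess_edge_infix; rewrite comb_walk_tour.
Qed.

Lemma comb_walk_cycle : cycle (parent_rel (@nat_of_ord _) comb_par) comb_walk.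
Proof.
have comb_le : all (fun v => v <= M) (comb k).
  by have := comb_tour_le k; rewrite all_rcons => /andP[].
rewrite cycle_map.
apply: (sub_in_cycle (P := fun v => v <= M) (e := parent_rel id comb_parent)) comb_le _.
  move=> a b /= a_le b_le; rewrite /parent_rel /relpre /comb_par /= !inordK //.
  by rewrite !inord_eq // (leq_trans (comb_parent_le _)).
by have := comb_path k; rewrite [X in rcons X 0]comb_cons [X in cycle _ X]comb_cons.
Qed.

Lemma comb_tree : tree_walk comb_walk /\ #|edges comb_walk| = M.
Proof.
rewrite comb_walkE; apply: (tree_walk_of_parent (par := comb_par)); last first.
  by rewrite -comb_walkE comb_walk_cycle.
move=> v vN0; have v_gt0 : 0 < v.
  by rewrite lt0n; apply: contraNneq vN0 => v0; rewrite -(inord_val v) v0.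
rewrite -comb_walkE /comb_par inordK; last by rewrite ltnS (leq_trans (comb_parent_le _)) // -ltnS.
split; last exact: comb_parent_lt.
by rewrite -{2}(inord_val v) comb_adj // v_gt0 -ltnS ltn_ord.
Qed.

Lemma comb_root x : is_root comb_walk x = (x == inord 0).
Proof. by rewrite /is_root comb_walkE /= eq_sym. Qed.

Lemma comb_adj_child n c : 0 < c <= M -> comb_parent c = n -> adj comb_walk (inord n) (inord c).
Proof. by move=> c_le <-; apply: comb_adj. Qed.

Lemma comb_spine_deg n : n %% 3 = 0 -> n + 3 <= M ->
  (if n == 0 then 2 else 3) <= deg comb_walk (inord n).
Proof.
move=> n_mod n_le; have parent_n : comb_parent n = n - 3 by rewrite /comb_parent /dvdn n_mod.
have adj_succ : adj comb_walk (inord n) (inord n.+1).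
  by apply: comb_adj_child; rewrite /comb_parent /dvdn; [lia | case: ifP; lia].
have adj_skip : adj comb_walk (inord n) (inord (n + 3)).
  by apply: comb_adj_child; rewrite /comb_parent /dvdn; [lia | case: ifP; lia].
case: (posnP n) => [n0 | n_gt0].
  apply: (deg_ge (s := [:: inord n.+1; inord (n + 3)])); last by rewrite /= adj_succ adj_skip.
  by rewrite /= inE inord_eq; lia.
apply: (deg_ge (s := [:: inord n.+1; inord (n + 3); inord (n - 3)])).
  by rewrite /= !inE !inord_eq; lia.
rewrite /= adj_succ adj_skip adj_sym -parent_n comb_adj //; lia.
Qed.

Lemma comb_kernel : kernel_walk comb_walk.
Proof.
apply: (kernel_walk_of_excess comb_tree.1) => x.
have x_le : (x : nat) <= M by rewrite -ltnS.
rewrite comb_root -(inord_val x); move: (nat_of_ord x) x_le => n n_le.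
case heavy: ((n %% 3 == 2) || (n == M)).
  left; exists (inord (comb_parent n)); rewrite excess_edge_sym comb_excess //; lia.
case heavy_child: ((n.+1 %% 3 == 2) || (n.+1 == M)).
  left; exists (inord n.+1); have := comb_excess (n := n.+1) _ heavy_child.
  by rewrite /comb_parent /dvdn; case: ifP => [|_ ->] //; lia.
by right; rewrite inord_eq //; apply: comb_spine_deg; lia.
Qed.

Lemma comb_walk_tight :
  [/\ kernel_walk comb_walk, excess comb_walk = k.+1, nsimple comb_walk = 2 * k
    & size comb_walk = 8 * k + 4].
Proof.
have [W_tree card_edges] := comb_tree.
have size_W : size comb_walk = 8 * k + 4 by rewrite size_map size_comb.
have := size_tree_walk W_tree; have := kernel_card_bound comb_kernel.
have := nsimple_add_nexcess comb_kernel; have := nexcess_le_excess comb_walk.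
rewrite card_edges size_W.
move: (excess _) (nsimple _) (nexcess _) => e s X *; split; [exact: comb_kernel | lia..].
Qed.

End Comb.

Lemma tight_kernel_walk xi : 1 <= xi -> exists m (W : seq 'I_m),
  [/\ kernel_walk W, excess W = xi, m = 3 * xi - 1, nsimple W = 2 * xi - 2
    & size W = 2 * (4 * xi - 2)].
Proof.
case: xi => // k _; have [kernel_W excess_W nsimple_W size_W] := comb_walk_tight k.
by exists (3 * k).+2, (comb_walk k); split; rewrite // ?nsimple_W ?size_W; lia.
Qed.

Lemma card_le_size m (W : seq 'I_m) : (forall x, x \in W) -> m <= size W.
Proof.
move=> cover; rewrite -{1}(card_ord m); apply: leq_trans (card_size W).
by apply/subset_leq_card/subsetP => x _; apply: cover.
Qed.

Lemma kcount_gt0 xi s l m (W : seq 'I_m) : kernel_walk W -> excess W = xi ->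
  nsimple W = s -> size W = 2 * l -> 0 < kcount xi s l.
Proof.
move=> W_kernel W_xi W_s W_l.
have m_le : m < (2 * l).+1 by rewrite ltnS -W_l; apply: card_le_size; case: W_kernel => [[]].
have W_tuple : size W == 2 * l by rewrite W_l.
rewrite /kcount (bigD1 (Ordinal m_le)) //= ltn_addr //.
by apply/card_gt0P; exists (Tuple W_tuple); rewrite inE; apply/asboolP.
Qed.

Lemma kcount_witness xi s l : 0 < kcount xi s l -> exists m (W : seq 'I_m),
  [/\ kernel_walk W, excess W = xi, nsimple W = s & size W = 2 * l].
Proof.
rewrite lt0n sum_nat_eq0 => /forallPn[i]; rewrite /= -lt0n => /card_gt0P[t].
by rewrite inE => /asboolP[W_kernel [W_xi W_s]]; exists i, t; rewrite size_tuple.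
Qed.

Section Kcoef.
Local Open Scope ring_scope.

Lemma Kcoef_neq0 xi s l : (0 < kcount xi s l)%N -> Kcoef xi s (l%:Z - xi%:Z + 1) l != 0.
Proof.
by rewrite /Kcoef eqxx => k_gt0; rewrite mulf_neq0 ?invr_eq0 ?pnatr_eq0 -?lt0n ?fact_gt0.
Qed.

Lemma Kcoef_support xi s a l : Kcoef xi s a l != 0 ->
  (0 < kcount xi s l)%N /\ a = l%:Z - xi%:Z + 1.
Proof.
rewrite /Kcoef; have [-> nz | _] := eqVneq a (l%:Z - xi%:Z + 1); last by rewrite eqxx.
by split => //; rewrite lt0n; apply: contraNneq nz => ->; rewrite mul0r.
Qed.

Lemma Kcoef_bounds xi s a l : (1 <= xi)%N -> Kcoef xi s a l != 0 ->
  [/\ 0 <= a, (s <= 2 * xi - 2)%N, a <= (3 * xi - 1)%:Z & (l <= 4 * xi - 2)%N].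
Proof.
move=> xi_gt0 /Kcoef_support[/kcount_witness[m [W [W_kernel W_xi W_s W_l]]] ->].
have [W_tree _ _ _] := W_kernel; have := size_tree_walk W_tree.
have [_] := kernel_walk_bounds W_kernel; rewrite W_l W_xi W_s.
by move: #|edges W| => E *; split; lia.
Qed.

End Kcoef.

Theorem lemma2 (xi : nat) (hxi : (1 <= xi)%N) :
  [/\ (forall (m : nat) (W : seq 'I_m), kernel_walk W -> excess W = xi ->
         (m <= 3 * xi - 1)%N /\ (nsimple W <= 2 * xi - 2)%N),
      (exists (m : nat) (W : seq 'I_m),
         [/\ kernel_walk W, excess W = xi & m = (3 * xi - 1)%N]),
      (exists (m : nat) (W : seq 'I_m),
         [/\ kernel_walk W, excess W = xi & nsimple W = (2 * xi - 2)%N])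
    & poly_degrees (Kcoef xi) (2 * xi - 2) (3 * xi - 1)%:Z (4 * xi - 2)].
Proof.
have [m [W [W_kernel W_xi W_m W_s W_size]]] := tight_kernel_walk hxi.
have tight_coef : Kcoef xi (2 * xi - 2) (3 * xi - 1)%:Z (4 * xi - 2) != 0%R.
  have -> : Posz (3 * xi - 1) = (Posz (4 * xi - 2) - Posz xi + 1)%R by lia.
  exact/Kcoef_neq0/(kcount_gt0 W_kernel W_xi W_s W_size).
split; [| by exists m, W | by exists m, W | split].
- by move=> m' W' W'_kernel W'_xi; case: (kernel_walk_bounds W'_kernel); rewrite W'_xi.
- by move=> s a l; apply: Kcoef_bounds.
- by exists (Posz (3 * xi - 1)), (4 * xi - 2).
- by exists (2 * xi - 2), (4 * xi - 2).
- by exists (2 * xi - 2), (Posz (3 * xi - 1)).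
Qed.
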